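(* Let $M$ be a regular $po$-$\Gamma$-semigroup. Then for every fuzzy subset $f$ of $M$ and every fuzzy left ideal $g$ of $M$, we have $f\wedge g\preceq f\circ g$.
   Context: Let $M$ and $\Gamma$ be nonempty sets with a map $M\times\Gamma\times M\to M$, $(a,\gamma,b)\mapsto a\gamma b$, satisfying $(a\gamma b)\mu c=a\gamma(b\mu c)$ for all $a,b,c\in M$, $\gamma,\mu\in\Gamma$. A $po$-$\Gamma$-semigroup is such an $M$ with a partial order $\le$ such that $a\le b$ implies $a\gamma c\le b\gamma c$ and $c\gamma a\le c\gamma b$ for all $c\in M$, $\gamma\in\Gamma$. For $H\subseteq M$, $(H]=\{t\in M: t\le h \text{ for some } h\in H\}$; $a\Gamma M\Gamma a=\{a\gamma x\mu a: x\in M,\gamma,\mu\in\Gamma\}$. $M$ is regular if $a\in(a\Gamma M\Gamma a]$ for every $a\in M$. A fuzzy subset of $M$ is a map $M\to[0,1]$. For $a\in M$ let $A_a=\{(y,z)\in M\times M: a\le y\gamma z \text{ for some }\gamma\in\Gamma\}$. $(f\circ g)(a)=\bigvee_{(y,z)\in A_a}\min\{f(y),g(z)\}$ if $A_a\ne\emptyset$, and $0$ otherwise. $(f\wedge g)(a)=\min\{f(a),g(a)\}$; $f\preceq g$ means $f(a)\le g(a)$ for all $a$. A fuzzy left ideal is a fuzzy subset $g$ with $g(x\gamma y)\ge g(y)$ for all $x,y\in M,\gamma\in\Gamma$, and $x\le y\Rightarrow g(x)\ge g(y)$. *)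

From Stdlib Require Import Reals Classical ClassicalEpsilon.
From Coquelicot Require Import Coquelicot.
Open Scope R_scope.

Record poGammaSemigroup := {
  carrier : Type;
  gam : Type;
  carrier_inh : inhabited carrier;
  gam_inh : inhabited gam;
  op : carrier -> gam -> carrier -> carrier;
  le : carrier -> carrier -> Prop;
  op_assoc : forall a b c (g m : gam), op (op a g b) m c = op a g (op b m c);
  le_refl : forall a, le a a;
  le_antisym : forall a b, le a b -> le b a -> a = b;
  le_trans : forall a b c, le a b -> le b c -> le a c;
  le_op_r : forall a b c (g : gam), le a b -> le (op a g c) (op b g c);
  le_op_l : forall a b c (g : gam), le a b -> le (op c g a) (op c g b)
}.

Section Defs.
Variable M : poGammaSemigroup.
Notation T := (carrier M).

Definition regular : Prop :=
  forall a : T, exists (x : T) (g mu : gam M), le M a (op M (op M a g x) mu a).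

Definition fuzzy_subset (f : T -> R) : Prop := forall x, 0 <= f x <= 1.

Definition A_set (a y z : T) : Prop := exists g : gam M, le M a (op M y g z).

Definition fcomp (f g : T -> R) (a : T) : R :=
  match excluded_middle_informative (exists y z, A_set a y z) with
  | left _ => real (Lub_Rbar (fun r => exists y z, A_set a y z /\ r = Rmin (f y) (g z)))
  | right _ => 0
  end.

Definition fmeet (f g : T -> R) (a : T) : R := Rmin (f a) (g a).

Definition fle (f g : T -> R) : Prop := forall a, f a <= g a.

Definition fuzzy_left_ideal (g : T -> R) : Prop :=
  fuzzy_subset g /\
  (forall (x y : T) (gm : gam M), g (op M x gm y) >= g y) /\
  (forall x y : T, le M x y -> g x >= g y).
End Defs.

(* Regularity writes a <= a ga x mu a = a ga (x mu a), so (a, x mu a) lies in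
   A_a, and g (x mu a) >= g a because g is a fuzzy left ideal.  Hence
   min (f a) (g a) <= min (f a) (g (x mu a)) <= (f o g)(a); the supremum is
   finite because f is bounded by 1. *)
From Stdlib Require Import Reals ClassicalEpsilon Lra.
From Coquelicot Require Import Coquelicot.
Open Scope R_scope.

Section FuzzyComposition.
Variable M : poGammaSemigroup.
Notation T := (carrier M).

Lemma A_set_regular {a x : T} {ga mu : gam M} :
  le M a (op M (op M a ga x) mu a) -> A_set M a a (op M x mu a).
Proof. intros Ha. exists ga. rewrite <- op_assoc. exact Ha. Qed.

Lemma fcomp_ge_Rmin (f g : T -> R) (a y z : T) :
  (forall t, f t <= 1) -> A_set M a y z -> Rmin (f y) (g z) <= fcomp M f g a.
Proof.
  intros Hf1 Hyz. unfold fcomp.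
  destruct (excluded_middle_informative _) as [Hne | Hne];
    [| exfalso; apply Hne; eauto].
  set (E := fun r => exists y z, A_set M a y z /\ r = Rmin (f y) (g z)).
  destruct (Lub_Rbar_correct E) as [Hub Hleast].
  assert (Hge : Rbar_le (Rmin (f y) (g z)) (Lub_Rbar E))
    by (apply Hub; exists y, z; auto).
  assert (Hbounded : Rbar_le (Lub_Rbar E) 1).
  { apply Hleast. intros r [y' [z' [_ ->]]]. simpl.
    specialize (Hf1 y'). pose proof (Rmin_l (f y') (g z')). lra. }
  destruct (Lub_Rbar E) as [v | |]; simpl in *; tauto.
Qed.

End FuzzyComposition.

Theorem lemma9 (M : poGammaSemigroup) :
  regular M ->
  forall f g : carrier M -> R,
    fuzzy_subset M f -> fuzzy_left_ideal M g ->
    fle M (fmeet M f g) (fcomp M f g).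
Proof.
  intros Hreg f g Hf [_ [Hg_left _]] a.
  destruct (Hreg a) as [x [ga [mu Ha]]].
  assert (Hg_xa : g a <= g (op M x mu a)) by apply Rge_le, Hg_left.
  apply Rle_trans with (Rmin (f a) (g (op M x mu a))).
  - apply Rmin_glb; [apply Rmin_l | eapply Rle_trans; [apply Rmin_r | exact Hg_xa]].
  - apply fcomp_ge_Rmin; [intros t; apply Hf | exact (A_set_regular M Ha)].
Qed.
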